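(* Let $n\ge 2$ and let $\mathbb{H}^n=\mathbb{R}^+\times\mathbb{R}^{n-1}=\{(t,x)\}$ be the hyperbolic upper-half space with metric $ds^2=\frac{1}{t^2}(dt^2+dx_1^2+\dots+dx_{n-1}^2)$. Let $h:\mathbb{R}^{n-1}\to\mathbb{C}$ be a non-constant function harmonic with respect to the Euclidean metric on $\mathbb{R}^{n-1}$, let $r\ge 1$ be an integer, and let $p_r:\mathbb{R}^+\to\mathbb{C}$ be given by $p_r(t)=(a_r+b_r t^{n-1})\cdot\log(t)^{r-1}$, where $(a_r,b_r)\in\mathbb{C}^2$ is non-zero. Then the function $f_r:\mathbb{H}^n\to\mathbb{C}$, $f_r(t,x)=p_r(t)\cdot h(x)$, is proper $r$-harmonic on $\mathbb{H}^n$.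
   Context: For a Riemannian manifold $(M,g)$ the Laplace–Beltrami operator (tension field) acts on complex-valued functions by $\tau(f)=\sum_{i,j}\frac{1}{\sqrt{|g|}}\frac{\partial}{\partial x_j}\bigl(g^{ij}\sqrt{|g|}\frac{\partial f}{\partial x_i}\bigr)$; on $\mathbb{H}^n$ this is $\tau(f)=t^2\sum_{k=1}^{n-1}\frac{\partial^2 f}{\partial x_k^2}+t^2\frac{\partial^2 f}{\partial t^2}-(n-2)t\frac{\partial f}{\partial t}$. Iterates: $\tau^0(f)=f$, $\tau^r(f)=\tau(\tau^{r-1}(f))$. A function $f$ is $r$-harmonic if $\tau^r(f)=0$, and proper $r$-harmonic if moreover $\tau^{r-1}(f)$ does not vanish identically. *)

From HB Require Import structures.
From mathcomp Require Import all_boot all_order all_algebra.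
From mathcomp Require Import all_classical all_reals.
From mathcomp Require Import topology normedtype derive exp.
From mathcomp Require Import complex.

Set Implicit Arguments.
Unset Strict Implicit.
Unset Printing Implicit Defensive.

Import Order.TTheory GRing.Theory Num.Theory.
Import numFieldNormedType.Exports.
Local Open Scope ring_scope.
Local Open Scope complex_scope.

Section Defs.
Variable R : realType.

Definition cderive1 (g : R -> R[i]) (t : R) : R[i] :=
  (derive1 (fun s => complex.Re (g s)) t) +i* (derive1 (fun s => complex.Im (g s)) t).

Definition cderivable (g : R -> R[i]) (t : R) : Prop :=
  derivable (fun s => complex.Re (g s)) t 1 /\ derivable (fun s => complex.Im (g s)) t 1.

Definition ccontinuous (m : nat) (g : 'rV[R]_m -> R[i]) : Prop :=
  continuous (fun x => complex.Re (g x)) /\ continuous (fun x => complex.Im (g x)).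

Definition ebasis (m : nat) (k : 'I_m) : 'rV[R]_m := \row_(j < m) (j == k)%:R.

Definition cpartial (m : nat) (k : 'I_m) (h : 'rV[R]_m -> R[i]) (x : 'rV[R]_m) : R[i] :=
  cderive1 (fun s => h (x + s *: ebasis k)) 0.

Definition C2 (m : nat) (h : 'rV[R]_m -> R[i]) : Prop :=
  ccontinuous h /\
  (forall k x, cderivable (fun s => h (x + s *: ebasis k)) 0) /\
  (forall k, ccontinuous (cpartial k h)) /\
  (forall j k x, cderivable (fun s => cpartial k h (x + s *: ebasis j)) 0) /\
  (forall j k, ccontinuous (cpartial j (cpartial k h))).

Definition euclid_laplacian (m : nat) (h : 'rV[R]_m -> R[i]) (x : 'rV[R]_m) : R[i] :=
  \sum_(k < m) cpartial k (cpartial k h) x.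

Definition harmonic (m : nat) (h : 'rV[R]_m -> R[i]) : Prop :=
  C2 h /\ forall x, euclid_laplacian h x = 0.

(* Functions on H^n = R^+ x R^(n-1) are represented as F : R -> 'rV_(n-1) -> C;
   only values with t > 0 are relevant. *)

Definition dt (m : nat) (F : R -> 'rV[R]_m -> R[i]) (t : R) (x : 'rV[R]_m) : R[i] :=
  cderive1 (fun s => F s x) t.
Definition dx (m : nat) (k : 'I_m) (F : R -> 'rV[R]_m -> R[i]) (t : R) (x : 'rV[R]_m) : R[i] :=
  cpartial k (F t) x.

Definition tension (n : nat) (F : R -> 'rV[R]_n.-1 -> R[i]) : R -> 'rV[R]_n.-1 -> R[i] :=
  fun t x =>
    (t ^+ 2)%:C * (\sum_(k < n.-1) dx k (dx k F) t x)
    + (t ^+ 2)%:C * dt (dt F) t x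
    - ((n - 2)%:R * t)%:C * dt F t x.

Definition tension_iter (n r : nat) (F : R -> 'rV[R]_n.-1 -> R[i]) :=
  iter r (@tension n) F.

Definition r_harmonic (n r : nat) (F : R -> 'rV[R]_n.-1 -> R[i]) : Prop :=
  forall t x, 0 < t -> tension_iter r F t x = 0.
Definition proper_r_harmonic (n r : nat) (F : R -> 'rV[R]_n.-1 -> R[i]) : Prop :=
  r_harmonic r F /\ exists t x, 0 < t /\ tension_iter r.-1 F t x != 0.

End Defs.

From HB Require Import structures.
From mathcomp Require Import all_boot all_order all_algebra.
From mathcomp Require Import all_classical all_reals.
From mathcomp Require Import topology normedtype derive exp realfun.
From mathcomp Require Import complex.
From mathcomp Require Import ring zify.

(* Separation of variables: if h is Euclidean-harmonic, then
   tau(p(t) h(x)) = (t^2 p'' - (n-2) t p') h.  On functions of the form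
   p(t) = P(ln t) + t^m Q(ln t), with m = n-1 and polynomials P, Q, this
   operator acts by P |-> P'' - m P' and Q |-> Q'' + m Q' ([tension_poly]).
   Both lower the degree by one and multiply the leading coefficient by
   -m d and m d respectively, so r-1 steps take (a X^(r-1), b X^(r-1)) to the
   constants ((-m)^(r-1) a, m^(r-1) b) (r-1)!, not both zero, and one more
   step gives 0.  A + t^m B with (A, B) <> 0 cannot vanish at both t = 1 and
   t = 2. *)

Set Implicit Arguments.
Unset Strict Implicit.
Unset Printing Implicit Defensive.

Import Order.TTheory GRing.Theory Num.Theory.
Import numFieldNormedType.Exports.
Local Open Scope ring_scope.
Local Open Scope complex_scope.

Section TensionPoly.
Variable K : nzRingType.
Implicit Types (c : K) (P : {poly K}).

Definition tension_poly c P := P^`()^`() - c *: P^`().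

Lemma coef_tension_poly c P i :
  (tension_poly c P)`_i = P`_i.+2 *+ i.+2 *+ i.+1 - c * (P`_i.+1 *+ i.+1).
Proof. by rewrite coefB coefZ !coef_deriv. Qed.

Lemma size_tension_poly c P : (size (tension_poly c P) <= (size P).-1)%N.
Proof.
apply/leq_sizeP => i lePi.
rewrite coef_tension_poly !nth_default ?mul0rn ?mulr0 ?subr0 //.
all: by case: (size P) lePi => //= k; lia.
Qed.

Lemma tension_polyC c (a : K) : tension_poly c a%:P = 0.
Proof. by rewrite /tension_poly derivC deriv0 scaler0 subr0. Qed.

Lemma iter_tension_poly c j P :
  (size P <= j.+1)%N -> iter j (tension_poly c) P = ((- c) ^+ j * P`_j *+ j`!)%:P.
Proof.
elim: j P => [|j IH] P szP; first by rewrite expr0 mul1r mulr1n [LHS]size1_polyC.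
have szTP : (size (tension_poly c P) <= j.+1)%N.
  by apply: leq_trans (size_tension_poly c P) _; case: (size P) szP => //= k; lia.
rewrite iterSr IH // coef_tension_poly [P`_j.+2]nth_default // !mul0rn sub0r.
by rewrite -mulNr mulrA -exprSr mulrnAr -mulrnA -factS.
Qed.

Lemma iter_tension_poly_monomial c k a :
  iter k (tension_poly c) (a *: 'X^k) = ((- c) ^+ k * a *+ k`!)%:P.
Proof.
rewrite iter_tension_poly ?coefZ ?coefXn ?eqxx ?mulr1 //.
by rewrite (leq_trans (size_scale_leq _ _)) // size_polyXn.
Qed.

End TensionPoly.

Section ComplexDerivative.
Variable R : realType.
Implicit Types (g f : R -> R[i]) (t : R) (c d e : R[i]).

Definition is_cderive g t d : Prop :=
  is_derive t 1 (fun s => complex.Re (g s)) (complex.Re d) /\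
  is_derive t 1 (fun s => complex.Im (g s)) (complex.Im d).

Lemma is_cderive_cderive1 g t d : is_cderive g t d -> cderive1 g t = d.
Proof.
case=> dRe dIm; rewrite /cderive1 !derive1E.
by rewrite !derive_val; case: d {dRe dIm}.
Qed.

Lemma cderivable_is_cderive g t : cderivable g t -> is_cderive g t (cderive1 g t).
Proof. by case=> dRe dIm; split; rewrite /cderive1 /= derive1E; exact: DeriveDef. Qed.

Lemma is_cderive_near f g t d :
  (\forall s \near t, f s = g s) -> is_cderive f t d -> is_cderive g t d.
Proof.
move=> fg [dRe dIm].
by split; [apply: near_eq_is_derive dRe|apply: near_eq_is_derive dIm];
  near do rewrite (near fg) //.
Unshelve. all: by end_near.
Qed.

Lemma is_cderive_cst c t : is_cderive (fun=> c) t 0.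
Proof. by split; exact: is_derive_cst. Qed.

Lemma is_cderive_real (u : R -> R) t du :
  is_derive t 1 u du -> is_cderive (fun s => (u s)%:C) t du%:C.
Proof. by move=> ?; split=> //; exact: is_derive_cst. Qed.

Lemma is_derive_ext (u v : R -> R) t du dv :
  u =1 v -> du = dv -> is_derive t 1 u du -> is_derive t 1 v dv.
Proof. by move=> /funext <- <-. Qed.

Lemma scaleRE (a b : R) : a *: b = a * b.
Proof. by []. Qed.

Lemma is_cderive_ext f g t d e :
  f =1 g -> d = e -> is_cderive f t d -> is_cderive g t e.
Proof. by move=> /funext <- <-. Qed.

Lemma is_cderiveD f g t d e :
  is_cderive f t d -> is_cderive g t e -> is_cderive (fun s => f s + g s) t (d + e).
Proof.
case: d e => [d1 d2] [e1 e2] [fRe fIm] [gRe gIm].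
split; [apply: is_derive_ext (is_deriveD fRe gRe)|apply: is_derive_ext (is_deriveD fIm gIm)] => //;
  by move=> s; rewrite !fctE; case: (f s) (g s) => ? ? [].
Qed.

Lemma is_cderiveM f g t d e :
  is_cderive f t d -> is_cderive g t e ->
  is_cderive (fun s => f s * g s) t (d * g t + f t * e).
Proof.
case: d e => [d1 d2] [e1 e2] [fRe fIm] [gRe gIm]; split.
- apply: is_derive_ext (is_deriveB (is_deriveM fRe gRe) (is_deriveM fIm gIm)).
    by move=> s; rewrite !fctE; case: (f s) (g s) => ? ? [].
  by case: (f t) (g t) => ? ? [? ?] /=; rewrite !scaleRE; ring.
- apply: is_derive_ext (is_deriveD (is_deriveM fRe gIm) (is_deriveM fIm gRe)).
    by move=> s; rewrite !fctE; case: (f s) (g s) => ? ? [].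
  by case: (f t) (g t) => ? ? [? ?] /=; rewrite !scaleRE; ring.
Qed.

Lemma is_cderiveMr f t d c :
  is_cderive f t d -> is_cderive (fun s => f s * c) t (d * c).
Proof.
move=> df; apply: is_cderive_ext (is_cderiveM df (is_cderive_cst c t)) => //.
by rewrite mulr0 addr0.
Qed.

Lemma cderive1_mull g t c :
  cderivable g t -> cderive1 (fun s => c * g s) t = c * cderive1 g t.
Proof.
move/cderivable_is_cderive => dg; apply: is_cderive_cderive1.
by apply: is_cderive_ext (is_cderiveM (is_cderive_cst c t) dg) => //; rewrite mul0r add0r.
Qed.

Lemma is_cderive_horner (P : {poly R[i]}) g t d :
  is_cderive g t d -> is_cderive (fun s => P.[g s]) t (P^`().[g t] * d).
Proof.
move=> dg; elim/poly_ind: P => [|P c IH].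
  by apply: is_cderive_ext (is_cderive_cst 0 t) => [s|]; rewrite ?deriv0 !horner0 ?mul0r.
apply: is_cderive_ext (is_cderiveD (is_cderiveM IH dg) (is_cderive_cst c t)) => [s|].
  by rewrite hornerMXaddC.
by rewrite derivMXaddC hornerD hornerM hornerX addr0; ring.
Qed.

Lemma is_cderive_inv t : t != 0 -> is_cderive (fun s => (s^-1)%:C) t (- t ^- 2)%:C.
Proof.
move=> t0; apply: is_cderive_real.
by apply: is_derive_eq (is_deriveV t0 (is_derive_id t 1)) _; rewrite scaleRE mulr1.
Qed.

End ComplexDerivative.

Section LogPolynomials.
Variable R : realType.
Implicit Types (m : nat) (t : R) (a b c : R[i]) (P Q : {poly R[i]}).

Definition logpoly m P Q t : R[i] := P.[(ln t)%:C] + (t ^+ m)%:C * Q.[(ln t)%:C].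

Lemma logpolyB m P1 Q1 P2 Q2 t :
  logpoly m (P1 - P2) (Q1 - Q2) t = logpoly m P1 Q1 t - logpoly m P2 Q2 t.
Proof. by rewrite /logpoly !hornerE; ring. Qed.

Lemma logpolyZ m c P Q t : logpoly m (c *: P) (c *: Q) t = c * logpoly m P Q t.
Proof. by rewrite /logpoly !hornerZ; ring. Qed.

Lemma logpolyC m a b t : logpoly m a%:P b%:P t = a + (t ^+ m)%:C * b.
Proof. by rewrite /logpoly !hornerC. Qed.

Lemma is_cderive_logpoly m P Q t : 0 < t ->
  is_cderive (logpoly m P Q) t ((t^-1)%:C * logpoly m P^`() (Q^`() + m%:R *: Q) t).
Proof.
move=> t0.
have dln := is_cderive_real (is_derive1_ln t0).
have dpow : is_cderive (fun s => (s ^+ m)%:C) t (t^-1 * (m%:R * t ^+ m))%:C.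
  apply/is_cderive_real/(is_derive_ext _ _ (is_deriveX m (is_derive_id t 1))) => [s|].
    by rewrite fctE.
  rewrite scaleRE mulr1; case: m => [|k]; first by rewrite !mul0r mulr0.
  by rewrite exprS mulrCA mulKf ?lt0r_neq0.
apply: is_cderive_ext (is_cderiveD (is_cderive_horner P dln)
                        (is_cderiveM dpow (is_cderive_horner Q dln))) => //.
by rewrite /logpoly hornerD hornerZ !rmorphM /= rmorph_nat; ring.
Qed.

Lemma logpoly_monomial m k a b t :
  (a + b * (t ^+ m)%:C) * ((ln t) ^+ k)%:C = logpoly m (a *: 'X^k) (b *: 'X^k) t.
Proof. by rewrite /logpoly !hornerZ hornerXn !rmorphXn; ring. Qed.

Lemma exists_pos_binomial_neq0 m (A B : R[i]) : (0 < m)%N -> (A, B) != (0, 0) ->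
  exists t, 0 < t /\ A + (t ^+ m)%:C * B != 0.
Proof.
move=> m0 AB; have [B0|B0] := eqVneq B 0.
  by exists 1; rewrite ltr01 B0 mulr0 addr0; move: AB; rewrite B0 xpair_eqE eqxx andbT.
have [AB0|] := eqVneq (A + B) 0; last by exists 1; rewrite ltr01 expr1n mul1r.
exists 2; split => //; move/eqP: AB0; rewrite addr_eq0 => /eqP ->.
rewrite -[X in - X + _]mul1r -mulNr -mulrDl addrC mulf_neq0 // subr_eq0.
by rewrite -(rmorph1 (real_complex R)) (inj_eq (@complexI R)) gt_eqF // exprn_egt1 ?ltr1n -?lt0n.
Qed.

End LogPolynomials.

Section HyperbolicTension.
Variable R : realType.

Lemma euclid_laplacian_mull m (h : 'rV[R]_m -> R[i]) c x :
  C2 h -> euclid_laplacian (fun y => c * h y) x = c * euclid_laplacian h x.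
Proof.
case=> _ [dh [_ [ddh _]]]; rewrite /euclid_laplacian mulr_sumr; apply: eq_bigr => k _.
have -> : cpartial k (fun y => c * h y) = fun y => c * cpartial k h y.
  by apply/funext => y; rewrite /cpartial (cderive1_mull _ (dh k y)).
by rewrite /cpartial (cderive1_mull _ (ddh k k x)).
Qed.

Lemma tension_logpoly n (h : 'rV[R]_n.-1 -> R[i]) P Q G : (2 <= n)%N -> harmonic h ->
  (forall t x, 0 < t -> G t x = logpoly n.-1 P Q t * h x) ->
  forall t x, 0 < t ->
  tension G t x = logpoly n.-1 (tension_poly n.-1%:R P) (tension_poly (- n.-1%:R) Q) t * h x.
Proof.
move=> n2 [h2 lap0] eqG t x t0; set m := n.-1.
have lapG : \sum_(k < m) dx k (dx k G) t x = 0.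
  rewrite -[LHS]/(euclid_laplacian (G t) x).
  rewrite (_ : G t = fun y => logpoly m P Q t * h y); last by apply/funext => y; rewrite eqG.
  by rewrite euclid_laplacian_mull // lap0 mulr0.
set DQ := Q^`() + m%:R *: Q.
have dG s : 0 < s -> is_cderive (fun u => G u x) s ((s^-1)%:C * logpoly m P^`() DQ s * h x).
  move=> s0; apply: is_cderive_near (is_cderiveMr (h x) (is_cderive_logpoly m P Q s0)).
  by near=> u; rewrite eqG //; near: u; exact: lt_nbhsr.
have ddG : is_cderive (fun u => dt G u x) t
    (((- t ^- 2)%:C * logpoly m P^`() DQ t
      + (t^-1)%:C * ((t^-1)%:C * logpoly m P^`()^`() (DQ^`() + m%:R *: DQ) t)) * h x).
  apply: is_cderive_near (is_cderiveMr (h x)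
    (is_cderiveM (is_cderive_inv (lt0r_neq0 t0)) (is_cderive_logpoly m P^`() DQ t0))).
  by near=> u; rewrite /dt (is_cderive_cderive1 (dG u _)) //; near: u; exact: lt_nbhsr.
have -> : tension_poly (- m%:R) Q = DQ^`().
  by rewrite /tension_poly /DQ derivD derivZ scaleNr opprK.
rewrite /tension lapG -[dt (dt G) t x]/(cderive1 (fun u => dt G u x) t).
rewrite (is_cderive_cderive1 ddG) /dt (is_cderive_cderive1 (dG t t0)).
have -> : logpoly m (tension_poly m%:R P) DQ^`() t =
    logpoly m P^`()^`() (DQ^`() + m%:R *: DQ) t - m%:R * logpoly m P^`() DQ t.
  by rewrite -logpolyZ -logpolyB addrK.
have -> : (n - 2)%:R = m%:R - 1 :> R.
  by rewrite /m -subn1 !natrB ?(ltnW n2) //; ring.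
have tC0 : t%:C != 0 by rewrite fmorph_eq0 gt_eqF.
rewrite !(rmorphM, rmorphXn, fmorphV, rmorphN, rmorphB, rmorph_nat, rmorph1) /=.
by field.
Unshelve. all: by end_near.
Qed.

Lemma tension_iter_logpoly n (h : 'rV[R]_n.-1 -> R[i]) P Q j :
  (2 <= n)%N -> harmonic h -> forall t x, 0 < t ->
  tension_iter j (fun t x => logpoly n.-1 P Q t * h x) t x =
  logpoly n.-1 (iter j (tension_poly n.-1%:R) P) (iter j (tension_poly (- n.-1%:R)) Q) t * h x.
Proof.
move=> n2 hh; elim: j => [//|j IH] t x t0.
by rewrite /tension_iter iterS (tension_logpoly n2 hh IH).
Qed.

End HyperbolicTension.

Theorem theorem3p3 (R : realType) (n : nat) (hn : (2 <= n)%N)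
  (h : 'rV[R]_n.-1 -> R[i])
  (hharm : harmonic h)
  (hnc : exists x y, h x != h y)
  (r : nat) (hr : (1 <= r)%N)
  (a b : R[i]) (hab : (a, b) != (0, 0)) :
  proper_r_harmonic r
    (fun (t : R) (x : 'rV[R]_n.-1) =>
       ((a + b * (t ^+ n.-1)%:C) * ((ln t) ^+ r.-1)%:C) * h x).
Proof.
case: r hr => [//|k] _ /=; set m := n.-1.
have m0 : (0 < m)%N by rewrite /m -subn1 subn_gt0.
rewrite (_ : (fun t x => _) = fun t x => logpoly m (a *: 'X^k) (b *: 'X^k) t * h x); last first.
  by apply/funext => t; apply/funext => x; rewrite logpoly_monomial.
split=> [t x t0|].
  rewrite tension_iter_logpoly // !iterS !iter_tension_poly_monomial !tension_polyC logpolyC.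
  by rewrite mulr0 addr0 mul0r.
have [x0 hx0] : exists x0, h x0 != 0.
  by case: hnc => x [y]; case: (eqVneq (h x) 0) => [->|]; [exists y; rewrite eq_sym|exists x].
have top_neq0 : ((- (m%:R : R[i])) ^+ k * a *+ k`!, (- - (m%:R : R[i])) ^+ k * b *+ k`!) != (0, 0).
  move: hab; apply: contra; rewrite !xpair_eqE !mulrn_eq0 !mulf_eq0 !expf_eq0 !oppr_eq0.
  by rewrite !pnatr_eq0 (gtn_eqF m0) (gtn_eqF (fact_gt0 k)) !andbF.
have [t [t0 nz]] := exists_pos_binomial_neq0 m0 top_neq0.
exists t, x0; split=> //.
by rewrite tension_iter_logpoly // !iter_tension_poly_monomial logpolyC mulf_neq0.
Qed.
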